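(* Let $H$ and $L$ be Hilbert spaces, let $T:H\to L$ be a bounded linear operator, and let $\mathcal{A}\subset H$ be nonempty. Suppose $T$ is bi-Lipschitz from $\mathcal{A}$ to $L$ with constants $\alpha,\beta>0$, i.e. $\alpha\|f_1-f_2\|^2\le\|T(f_1-f_2)\|^2\le\beta\|f_1-f_2\|^2$ for all $f_1,f_2\in\mathcal{A}$. Let $f\in H$, $e\in L$ and $g=Tf+e$. Let $\epsilon,\delta>0$. Let $f_{opt}^\epsilon\in\mathcal{A}$ be any element with $\|g-Tf_{opt}^\epsilon\|^2\le\inf_{h\in\mathcal{A}}\|g-Th\|^2+\epsilon$, and let $f_{\mathcal{A}}^\delta\in\mathcal{A}$ be any element with $\|f-f_{\mathcal{A}}^\delta\|^2\le\inf_{h\in\mathcal{A}}\|f-h\|^2+\delta$. Then \[ \|f-f_{opt}^\epsilon\|\le\frac{2}{\sqrt{\alpha}}\|T(f-f_{\mathcal{A}}^\delta)+e\|+\inf_{\tilde f\in\mathcal{A}}\|f-\tilde f\|+\frac{\sqrt{\epsilon}}{\sqrt{\alpha}}+\sqrt{\delta}. \]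
   Context: The elements $f_{opt}^\epsilon$ (''$\epsilon$-optimal estimates'') and $f_{\mathcal{A}}^\delta$ (a ''$\delta$-projection'' of $f$ onto $\mathcal{A}$) exist since $\mathcal{A}$ is nonempty and $\epsilon,\delta>0$. *)

From HB Require Import structures.
From mathcomp Require Import all_boot all_order all_algebra.
From mathcomp Require Import all_classical all_reals all_analysis.
Set Implicit Arguments. Unset Strict Implicit. Unset Printing Implicit Defensive.
Import Order.TTheory GRing.Theory Num.Theory.
Import numFieldNormedType.Exports.
Local Open Scope classical_set_scope.
Local Open Scope ring_scope.

Definition inner_product_of_norm (R : realType) (H : normedModType R)
    (ip : H -> H -> R) : Prop :=
  [/\ (forall x y, ip x y = ip y x),
      (forall (a : R) (x y z : H), ip (a *: x + y) z = a * ip x z + ip y z)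
    & (forall x, `|x| ^+ 2 = ip x x)].

Definition hilbert_space (R : realType) (H : completeNormedModType R) : Prop :=
  exists ip : H -> H -> R, inner_product_of_norm ip.

From HB Require Import structures.
From mathcomp Require Import all_boot all_order all_algebra.
From mathcomp Require Import all_classical all_reals all_analysis.
From mathcomp Require Import lra.
Set Implicit Arguments. Unset Strict Implicit. Unset Printing Implicit Defensive.
Import Order.TTheory GRing.Theory Num.Theory.
Import numFieldNormedType.Exports.
Local Open Scope classical_set_scope.
Local Open Scope ring_scope.

(* The [delta]-projection [fA] is within [sqrt delta] of the distance from [f]
   to [A], and the [eps]-optimal estimate [fopt] fits the data within
   [sqrt eps] of [fA].  By the triangle inequality [T (fA - fopt)] is then at
   most twice the residual [g - T fA] plus [sqrt eps], and the lower
   bi-Lipschitz bound converts this into a bound on [fA - fopt]; one more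
   triangle inequality through [fA] gives the estimate. *)

Section RealInequalities.
Variable R : realType.

Lemma ler_add_sqrtr (a b c : R) :
  0 <= b -> 0 <= c -> a ^+ 2 <= b ^+ 2 + c -> a <= b + Num.sqrt c.
Proof.
move=> b0 c0 abc; have sc0 := sqrtr_ge0 c.
have sqc : Num.sqrt c ^+ 2 = c by rewrite sqr_sqrtr.
case: (lerP a (b + Num.sqrt c)) => // lt_ba; nra.
Qed.

Lemma sqrtr_mul_le (alpha a b : R) :
  0 <= alpha -> 0 <= a -> 0 <= b -> alpha * a ^+ 2 <= b ^+ 2 ->
  Num.sqrt alpha * a <= b.
Proof.
move=> alpha0 a0 b0 le_ab.
rewrite -(ger0_norm a0) -(ger0_norm b0) -!sqrtr_sqr -sqrtrM //.
by rewrite ler_sqrt // sqr_ge0.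
Qed.

Lemma inf_sqr_le (T : Type) (F : T -> R) (A : set T) x :
  A x -> inf [set F h ^+ 2 | h in A] <= F x ^+ 2.
Proof.
move=> Ax; apply: ge_inf; last by exists x.
by exists 0 => _ [h _ <-]; exact: sqr_ge0.
Qed.

Section NearMinimizer.
Variables (T : Type) (F : T -> R) (A : set T) (x : T) (c : R).
Hypotheses (F_ge0 : forall h, 0 <= F h) (c_ge0 : 0 <= c).
Hypothesis near_min : F x ^+ 2 <= inf [set F h ^+ 2 | h in A] + c.

Lemma near_min_sqr_le h : A h -> F x <= F h + Num.sqrt c.
Proof.
move=> Ah; apply: ler_add_sqrtr => //.
by apply: le_trans near_min _; rewrite lerD2r inf_sqr_le.
Qed.

Lemma near_min_sqr_le_inf :
  A !=set0 -> F x <= inf [set F h | h in A] + Num.sqrt c.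
Proof.
case=> h0 Ah0; rewrite -lerBlDr; apply: lb_le_inf; first by exists (F h0), h0.
by move=> _ [h Ah <-]; rewrite lerBlDr near_min_sqr_le.
Qed.

End NearMinimizer.
End RealInequalities.

Section LinearStability.
Variables (R : realType) (H L : normedModType R) (T : {linear H -> L}).

Lemma norm_linear_sub_le (g : L) (x y : H) :
  `|T (x - y)| <= `|g - T y| + `|g - T x|.
Proof.
have -> : T (x - y) = (g - T y) - (g - T x).
  by rewrite linearB /= opprB [RHS]addrC addrA subrK.
exact: ler_normB.
Qed.

Lemma lower_lipschitz_fit_le (s r : R) (g : L) (x y : H) :
  0 < s -> s * `|x - y| <= `|T (x - y)| ->
  `|g - T y| <= `|g - T x| + r ->
  `|x - y| <= (2 * `|g - T x| + r) / s.
Proof.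
move=> s_gt0 lower fit; rewrite ler_pdivlMr // mulrC.
have := norm_linear_sub_le g x y; lra.
Qed.

End LinearStability.

Theorem mainTheorem2 (R : realType) (H L : completeNormedModType R)
  (hH : hilbert_space H) (hL : hilbert_space L)
  (T : {linear H -> L}) (hTc : continuous T)
  (A : set H) (hA : A !=set0)
  (alpha beta : R) (halpha : 0 < alpha) (hbeta : 0 < beta)
  (hbiL : forall f1 f2, A f1 -> A f2 ->
      alpha * `|f1 - f2| ^+ 2 <= `|T (f1 - f2)| ^+ 2 /\
      `|T (f1 - f2)| ^+ 2 <= beta * `|f1 - f2| ^+ 2)
  (f : H) (e : L) (g : L) (hg : g = T f + e)
  (eps delta : R) (heps : 0 < eps) (hdelta : 0 < delta)
  (fopt fA : H) (hfopt : A fopt)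
  (hfopt_min : `|g - T fopt| ^+ 2 <= inf [set `|g - T h| ^+ 2 | h in A] + eps)
  (hfA : A fA)
  (hfA_min : `|f - fA| ^+ 2 <= inf [set `|f - h| ^+ 2 | h in A] + delta) :
  `|f - fopt| <= 2 / Num.sqrt alpha * `|T (f - fA) + e|
                 + inf [set `|f - h| | h in A]
                 + Num.sqrt eps / Num.sqrt alpha + Num.sqrt delta.
Proof.
have residual_fA : g - T fA = T (f - fA) + e by rewrite hg linearB /= addrAC.
have fit := near_min_sqr_le (fun h => normr_ge0 (g - T h)) (ltW heps)
  hfopt_min hfA.
have proj := near_min_sqr_le_inf (fun h => normr_ge0 (f - h)) (ltW hdelta)
  hfA_min hA.
have lower : Num.sqrt alpha * `|fA - fopt| <= `|T (fA - fopt)|.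
  by apply: sqrtr_mul_le (ltW halpha) _ _ (proj1 (hbiL _ _ hfA hfopt)).
have sqrt_alpha_gt0 : 0 < Num.sqrt alpha by rewrite sqrtr_gt0.
have close := lower_lipschitz_fit_le sqrt_alpha_gt0 lower fit.
have split : `|f - fopt| <= `|f - fA| + `|fA - fopt| := ler_distD fA f fopt.
rewrite residual_fA mulrDl mulrAC in close; lra.
Qed.
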